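(* Let $G$ be a maximal $3$-$\gamma_{c}$-vertex critical graph, let $I$ be a maximum independent set of $G$, and let $W$ be a vertex set inducing a maximum complete subgraph of $G$, chosen (among all such sets) so that $|I\cap W|$ is minimum. If $|I|+|W|=n-1$, where $n=|V(G)|$, then $|W\cap I|=0$.
   Context: All graphs are finite, simple and connected. A set $D\subseteq V(G)$ is a connected dominating set of $G$ if every vertex of $G$ is in $D$ or adjacent to a vertex of $D$, and $G[D]$ is connected; $\gamma_{c}(G)$ is the minimum cardinality of such a set. $G$ is $k$-$\gamma_{c}$-edge critical if $\gamma_{c}(G)=k$ and $\gamma_{c}(G+uv)<k$ for every pair of non-adjacent vertices $u,v$. A $2$-connected graph $G$ is $k$-$\gamma_{c}$-vertex critical if $\gamma_{c}(G)=k$ and $\gamma_{c}(G-v)<k$ for every $v\in V(G)$. $G$ is maximal $k$-$\gamma_{c}$-vertex critical if it is both $k$-$\gamma_{c}$-edge critical and $k$-$\gamma_{c}$-vertex critical. *)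

(* A graph is given by a vertex set V : {set T} over a finType T
   and an adjacency relation e : rel T (assumed symmetric and irreflexive). *)
From mathcomp Require Import all_boot.
Set Implicit Arguments. Unset Strict Implicit. Unset Printing Implicit Defensive.

Section Graphs.
Variable T : finType.

Definition simple_rel (e : rel T) : Prop := symmetric e /\ (forall x, ~~ e x x).

Definition restr (e : rel T) (D : {set T}) : rel T :=
  [rel x y | [&& x \in D, y \in D & e x y]].

Definition conn_set (e : rel T) (D : {set T}) : bool :=
  [forall x in D, forall y in D, connect (restr e D) x y].

Definition cds (V : {set T}) (e : rel T) (D : {set T}) : bool :=
  [&& D \subset V,
      [forall x in V, (x \in D) || [exists y in D, e x y]] &
      conn_set e D].

(* connected domination number; defaults to #|V| if no CDS exists
   (only used on connected graphs, where a CDS always exists) *)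
Definition gamma_c (V : {set T}) (e : rel T) : nat :=
  \big[minn/#|V|]_(D : {set T} | cds V e D) #|D|.

Definition add_edge (e : rel T) (u v : T) : rel T :=
  [rel x y | [|| e x y, (x == u) && (y == v) | (x == v) && (y == u)]].

Definition two_connected (V : {set T}) (e : rel T) : Prop :=
  2 < #|V| /\ conn_set e V /\ (forall v, v \in V -> conn_set e (V :\ v)).

Definition edge_critical (k : nat) (V : {set T}) (e : rel T) : Prop :=
  gamma_c V e = k /\
  (forall u v, u \in V -> v \in V -> u != v -> ~~ e u v ->
     gamma_c V (add_edge e u v) < k).

Definition vertex_critical (k : nat) (V : {set T}) (e : rel T) : Prop :=
  two_connected V e /\ gamma_c V e = k /\
  (forall v, v \in V -> gamma_c (V :\ v) e < k).

Definition maximal_vertex_critical (k : nat) (V : {set T}) (e : rel T) : Prop :=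
  edge_critical k V e /\ vertex_critical k V e.

Definition independent (e : rel T) (I : {set T}) : bool :=
  [forall x in I, forall y in I, ~~ e x y].

Definition clique (e : rel T) (W : {set T}) : bool :=
  [forall x in W, forall y in W, (x != y) ==> e x y].

Definition max_independent (V : {set T}) (e : rel T) (I : {set T}) : Prop :=
  I \subset V /\ independent e I /\
  (forall J : {set T}, J \subset V -> independent e J -> #|J| <= #|I|).

Definition max_clique (V : {set T}) (e : rel T) (W : {set T}) : Prop :=
  W \subset V /\ clique e W /\
  (forall W' : {set T}, W' \subset V -> clique e W' -> #|W'| <= #|W|).

End Graphs.

(* Suppose x lies in I and W. Then I :&: W = {x}, and exactly two vertices a, b lie
   outside I :|: W. Vertex criticality gives, for every v, an edge pq dominating G - v with
   v adjacent to neither p nor q (a connected dominating set of G - v of size at most 2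
   containing a neighbour of v would dominate G). Applied at x and at the vertices of W - x,
   this shows that x is adjacent to exactly one of a, b, say a, that a has no neighbour in
   W - x, and that b is adjacent to every vertex of I - x.
   If ab is an edge, then b has no neighbour in W - x either, which forces |W| <= 2, so {a, b}
   is a maximum clique missing I, against the choice of W. Otherwise some w in W - x is not
   adjacent to b (else (W - x) + b would be such a clique), and a connected dominating set of
   size 2 of G + bw is an edge d1 d2 with d1 in I and d2 in {b, w}; it cannot dominate x when
   d2 = b, nor the neighbour of a in I - x that is not adjacent to w when d2 = w. *)

From HB Require Import structures.
From mathcomp Require Import all_boot zify.
Set Implicit Arguments. Unset Strict Implicit. Unset Printing Implicit Defensive.

(* Makes [bigD1] available for the minimum defining [gamma_c]. *)
HB.instance Definition _ := SemiGroup.isComLaw.Build nat minn minnA minnC.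

Section Basics.
Variables (T : finType) (e : rel T).

Lemma independentP (I : {set T}) :
  reflect {in I &, forall u v, ~~ e u v} (independent e I).
Proof.
apply: (iffP forall_inP) => [indI u v uI|indI u uI]; first exact: (forall_inP (indI u uI)).
by apply/forall_inP => v; apply: indI.
Qed.

Lemma cliqueP (W : {set T}) :
  reflect {in W &, forall u v, u != v -> e u v} (clique e W).
Proof.
apply: (iffP forall_inP) => [clqW u v uW vW|clqW u uW].
  exact/implyP/(forall_inP (clqW u uW)).
by apply/forall_inP => v vW; apply/implyP/clqW.
Qed.

Lemma clique_pair p q : symmetric e -> e p q -> clique e [set p; q].
Proof.
move=> sym epq; apply/cliqueP => u v /set2P[]-> /set2P[]->; rewrite ?eqxx //.
by rewrite sym.
Qed.

Lemma independent_pair p q :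
  symmetric e -> irreflexive e -> ~~ e p q -> independent e [set p; q].
Proof.
move=> sym irr npq; apply/independentP => u v /set2P[]-> /set2P[]->;
  by rewrite ?irr // sym.
Qed.

Lemma three_le_independence_add_clique (I W : {set T}) (a b : T) :
  symmetric e -> irreflexive e -> a != b ->
  max_independent [set: T] e I -> max_clique [set: T] e W -> 3 <= #|I| + #|W|.
Proof.
move=> sym irr ab [_ [_ maxI]] [_ [_ maxW]].
have clq_a : clique e [set a] by apply/cliqueP => u v /set1P-> /set1P->; rewrite eqxx.
have ind_a : independent e [set a] by apply/independentP => u v /set1P-> /set1P->; rewrite irr.
have := maxW _ (subsetT _) clq_a; have := maxI _ (subsetT _) ind_a.
rewrite cards1 => I_gt0 W_gt0.
have [eab|nab] := boolP (e a b).
  by have := maxW _ (subsetT _) (clique_pair sym eab); rewrite cards2 ab; lia.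
by have := maxI _ (subsetT _) (independent_pair sym irr nab); rewrite cards2 ab; lia.
Qed.

Lemma conn_setP (D : {set T}) :
  reflect {in D &, forall u v, connect (restr e D) u v} (conn_set e D).
Proof.
apply: (iffP forall_inP) => [cD u v uD|cD u uD]; first exact: (forall_inP (cD u uD)).
by apply/forall_inP => v; apply: cD.
Qed.

Lemma dom_set1 u p :
  (u \in [set p]) || [exists y in [set p], e u y] = (u == p) || e u p.
Proof.
rewrite inE; congr (_ || _); apply/exists_inP/idP => [[y /set1P-> //]|eup].
by exists p; rewrite ?set11.
Qed.

Lemma dom_set2 u p q :
  (u \in [set p; q]) || [exists y in [set p; q], e u y] = [|| u == p, u == q, e u p | e u q].
Proof.
rewrite !inE -orbA; congr [|| _, _ | _]; apply/exists_inP/orP => [[y /set2P[]-> ->]|[]];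
  by [left | right | exists p; rewrite ?set21 | exists q; rewrite ?set22].
Qed.

End Basics.

Section ConnectedDomination.
Variables (T : finType) (e : rel T) (V : {set T}).

Lemma gamma_c_le_card D : cds V e D -> gamma_c V e <= #|D|.
Proof. by move=> HD; rewrite /gamma_c (bigD1 D) //= geq_minl. Qed.

Lemma gamma_c_le_cardV : gamma_c V e <= #|V|.
Proof. by rewrite /gamma_c; elim/big_rec: _ => // D m _; rewrite geq_min => ->; rewrite orbT. Qed.

Lemma small_cds_exists k :
  gamma_c V e < k -> k <= #|V| -> exists2 D, cds V e D & #|D| < k.
Proof.
move=> gk kV; case: (pickP (fun D => cds V e D && (#|D| < k))) => [D /andP[]|none].
  by exists D.
suff: k <= gamma_c V e by rewrite leqNgt gk.
rewrite /gamma_c; elim/big_ind: _ => // [m1 m2|D HD]; first by rewrite leq_min => ->.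
by rewrite leqNgt; move: (none D); rewrite HD => /= ->.
Qed.

Lemma cds_pair p q : symmetric e -> p \in V -> q \in V -> e p q ->
  {in V, forall u, [|| u == p, u == q, e u p | e u q]} -> cds V e [set p; q].
Proof.
move=> sym pV qV epq dom; apply/and3P; split.
- by apply/subsetP => u; rewrite !inE => /orP[]/eqP->.
- by apply/forall_inP => u /dom; rewrite dom_set2.
apply/conn_setP => u v uD vD.
have [->|uv] := eqVneq u v; first exact: connect0.
apply: connect1; apply/and3P; split => //.
by move: uD vD uv; rewrite !inE => /orP[]/eqP-> /orP[]/eqP->; rewrite ?eqxx // sym.
Qed.

Lemma gamma_c_le2 p q : symmetric e -> p \in V -> q \in V -> e p q ->
  {in V, forall u, [|| u == p, u == q, e u p | e u q]} -> gamma_c V e <= 2.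
Proof.
move=> sym pV qV epq dom; apply: leq_trans (gamma_c_le_card (cds_pair sym pV qV epq dom)) _.
by rewrite cards2; case: (p != q).
Qed.

Lemma conn_set_pair_adj p q :
  ~~ e p p -> p != q -> conn_set e [set p; q] -> e p q.
Proof.
move=> npp pq /conn_setP/(_ p q (set21 p q) (set22 p q)).
case/connectP=> [[|s0 s] /= path_s last_s]; first by rewrite -last_s eqxx in pq.
case/andP: path_s => /and3P[_ /set2P[->|->] //].
by rewrite (negbTE npp).
Qed.

Lemma add_edge_l u v x y : x != u -> x != v -> add_edge e u v x y = e x y.
Proof. by move=> /negbTE xu /negbTE xv; rewrite /add_edge /= xu xv !orbF. Qed.

Lemma add_edge_r u v x y : y != u -> y != v -> add_edge e u v x y = e x y.
Proof. by move=> /negbTE yu /negbTE yv; rewrite /add_edge /= yu yv !andbF !orbF. Qed.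

Lemma cds_add_edge u v (D : {set T}) :
  u \notin D -> v \notin D -> cds V (add_edge e u v) D -> cds V e D.
Proof.
move=> /memPn uD /memPn vD /and3P[sub dom cn]; apply/and3P; split => //.
  apply/forall_inP => x /(forall_inP dom) /orP[->//|/exists_inP[y yD exy]].
  rewrite add_edge_r ?uD ?vD // in exy.
  by apply/orP; right; apply/exists_inP; exists y.
have same : restr (add_edge e u v) D =2 restr e D.
  move=> x y; rewrite /restr /=; case yD: (y \in D); rewrite ?andbF //=.
  by rewrite add_edge_r ?uD ?vD.
apply/conn_setP => x y xD yD.
by rewrite -(eq_connect same); move/conn_setP: cn; apply.
Qed.

Lemma cds_add_edge_hits u v (D : {set T}) :
  #|D| < gamma_c V e -> cds V (add_edge e u v) D -> (u \in D) || (v \in D).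
Proof.
move=> D_lt cdsD; apply: contraLR D_lt; rewrite negb_or -leqNgt => /andP[uD vD].
exact: gamma_c_le_card (cds_add_edge uD vD cdsD).
Qed.

Lemma cds_of_cds_delete v (D : {set T}) :
  cds (V :\ v) e D -> [exists d in D, e v d] -> cds V e D.
Proof.
move=> /and3P[subD domD cnD] evD; apply/and3P; split => //.
  by apply: subset_trans subD (subsetDl _ _).
apply/forall_inP => u uV; have [->|uv] := eqVneq u v; first by rewrite evD orbT.
by apply: (forall_inP domD); rewrite !inE uv.
Qed.

Lemma conn_set_has_adj u v :
  conn_set e V -> u \in V -> v \in V -> u != v -> exists w, e v w.
Proof.
move=> /conn_setP cV uV vV uv; case/connectP: (cV v u vV uV) => [[|w s] /= path_s last_s].
  by rewrite last_s eqxx in uv.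
by exists w; case/andP: path_s => /and3P[].
Qed.

End ConnectedDomination.

Section DominatingEdge.
Variables (T : finType) (e : rel T).
Hypotheses (sym : symmetric e) (irr : irreflexive e).

Definition dominating_edge_avoiding (v p q : T) : Prop :=
  [/\ e p q, ~~ e v p, ~~ e v q & forall u, u != v -> [|| u == p, u == q, e u p | e u q]].

Lemma dominating_edge_avoidingC v p q :
  dominating_edge_avoiding v p q -> dominating_edge_avoiding v q p.
Proof.
case=> epq nvp nvq dom; split => //; first by rewrite sym.
by move=> u /dom; case/or4P=> ->; rewrite ?orbT.
Qed.

Lemma dominating_edge_avoiding_neq v p q : dominating_edge_avoiding v p q -> p != v.
Proof. by case=> epq _ nvq _; apply: contraTneq epq => ->. Qed.

Lemma dominating_vertex_delete_absurd v p :
  conn_set e [set: T] -> 2 < gamma_c [set: T] e -> p != v -> ~~ e v p ->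
  (forall u, u != v -> (u == p) || e u p) -> False.
Proof.
move=> conn g2 pv nvp dom.
have [w evw] := conn_set_has_adj conn (in_setT p) (in_setT v) pv.
have wv : w != v by apply: contraTneq evw => ->; rewrite irr.
have ewp : e w p by case/orP: (dom w wv) => [/eqP wp|//]; rewrite -wp evw in nvp.
suff : gamma_c [set: T] e <= 2 by rewrite leqNgt g2.
apply: (gamma_c_le2 sym (in_setT w) (in_setT p) ewp) => u _.
have [->|uv] := eqVneq u v; first by rewrite evw !orbT.
by case/orP: (dom u uv) => ->; rewrite !orbT.
Qed.

Lemma dominating_edge_avoiding_exists v :
  conn_set e [set: T] -> 3 < #|T| ->
  2 < gamma_c [set: T] e -> gamma_c ([set: T] :\ v) e < 3 ->
  exists p q, dominating_edge_avoiding v p q.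
Proof.
move=> conn n4 g2 gv.
have card_del : 3 <= #|[set: T] :\ v| by rewrite cardsDS ?sub1set ?inE // cardsT cards1; lia.
have [D cdsD D2] := small_cds_exists gv card_del.
have nvD : forall d, d \in D -> ~~ e v d.
  move=> d dD; apply: contraL g2 => evd; rewrite -leqNgt.
  apply: leq_trans (gamma_c_le_card (cds_of_cds_delete cdsD _)) _ => //.
  by apply/exists_inP; exists d.
have domD : forall u, u != v -> (u \in D) || [exists y in D, e u y].
  by case/and3P: cdsD => _ /forall_inP domD _ u uv; apply: domD; rewrite !inE uv.
have [u0 u0v] : exists u0, u0 != v.
  have /card_gt0P[u0] : 0 < #|[set: T] :\ v| by lia.
  by rewrite !inE andbT; exists u0.
have D_gt0 : 0 < #|D|.
  by apply/card_gt0P; case/orP: (domD u0 u0v) => [|/exists_inP[y yD _]]; [exists u0|exists y].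
have [/cards2P[p [q [pq defD]]]|D_ne2] := boolP (#|D| == 2).
  have epq : e p q.
    by apply: conn_set_pair_adj pq _; [rewrite irr | case/and3P: cdsD; rewrite defD].
  exists p, q; split; rewrite ?nvD ?defD ?set21 ?set22 //.
  by move=> u /domD; rewrite defD dom_set2.
have /cards1P[p defD] : #|D| == 1 by lia.
have pD : p \in D by rewrite defD set11.
have pv : p != v by case/and3P: cdsD => /subsetP/(_ p pD); rewrite !inE => /andP[].
case: (dominating_vertex_delete_absurd conn g2 pv (nvD p pD)) => u /domD.
by rewrite defD dom_set1.
Qed.

End DominatingEdge.

Section TwoVerticesOutside.
Variables (T : finType) (e : rel T) (I W : {set T}) (x : T).
Hypotheses (sym : symmetric e) (irr : irreflexive e).
Hypotheses (indI : {in I &, forall u v, ~~ e u v})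
           (clqW : {in W &, forall u v, u != v -> e u v}).
Hypotheses (xI : x \in I) (xW : x \in W).
Hypothesis W_max : forall W' : {set T}, clique e W' -> #|W'| <= #|W|.
Hypothesis clique_meets_I :
  forall W' : {set T}, clique e W' -> #|W| <= #|W'| -> exists2 u, u \in I & u \in W'.
Hypothesis gamma_gt2 : 2 < gamma_c [set: T] e.
Hypothesis edge_crit :
  forall u v, u != v -> ~~ e u v -> gamma_c [set: T] (add_edge e u v) < 3.
Hypothesis vertex_crit : forall v, exists p q, dominating_edge_avoiding e v p q.

Lemma I_meet_W u : u \in I -> u \in W -> u = x.
Proof. by move=> uI uW; apply: contraTeq (indI uI xI) => ux; rewrite negbK clqW. Qed.

Lemma no_dominating_edge p q :
  e p q -> (forall u, [|| u == p, u == q, e u p | e u q]) -> False.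
Proof.
move=> epq dom; have := gamma_c_le2 sym (in_setT p) (in_setT q) epq (fun u _ => dom u).
by rewrite leqNgt gamma_gt2.
Qed.

Lemma adj_x_notin_IW w p :
  w \in W -> p != w -> ~~ e w p -> e x p -> p \notin I /\ p \notin W.
Proof.
move=> wW pw nwp exp; split; first by apply: contraL exp; apply: indI.
by apply: contra nwp => pW; rewrite clqW // eq_sym.
Qed.

Lemma W_edge_dominates_x w p q :
  w \in W -> w != x -> dominating_edge_avoiding e w p q -> e x p || e x q.
Proof.
move=> wW wx [_ nwp nwq dom]; have ewx : e w x by rewrite clqW.
have xw : x != w by rewrite eq_sym.
case/or4P: (dom x xw) => [/eqP xp|/eqP xq|->|->]; rewrite ?orbT //.
- by rewrite -xp ewx in nwp.
- by rewrite -xq ewx in nwq.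
Qed.

Section Oriented.
Variables a b : T.
Hypotheses (aI : a \notin I) (aW : a \notin W) (bI : b \notin I) (bW : b \notin W).
Hypothesis outside : forall u, u \notin I -> u \notin W -> u = a \/ u = b.
Hypotheses (exa : e x a) (nxb : ~~ e x b).

Lemma adj_x_eq_a w p : w \in W -> p != w -> ~~ e w p -> e x p -> p = a.
Proof.
move=> wW pw nwp exp; have [pI pW] := adj_x_notin_IW wW pw nwp exp.
by case: (outside pI pW) => // pb; move: nxb; rewrite -pb exp.
Qed.

Lemma nadj_x_cases u : u != x -> ~~ e x u -> u \in I \/ u = b.
Proof.
move=> ux nxu; have [uI|uI] := boolP (u \in I); [by left | right].
have uW : u \notin W by apply: contra nxu => uW; rewrite clqW // eq_sym.
by case: (outside uI uW) => // ua; rewrite ua exa in nxu.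
Qed.

Lemma W_dominating_edge_a w :
  w \in W -> w != x -> exists r, dominating_edge_avoiding e w a r.
Proof.
move=> wW wx; have [p [q dpq]] := vertex_crit w; have [_ nwp nwq _] := dpq.
have pw := dominating_edge_avoiding_neq dpq.
have qw := dominating_edge_avoiding_neq (dominating_edge_avoidingC sym dpq).
case/orP: (W_edge_dominates_x wW wx dpq) => [exp|exq].
  by exists q; rewrite -(adj_x_eq_a wW pw nwp exp).
by exists p; apply: (dominating_edge_avoidingC sym); rewrite -(adj_x_eq_a wW qw nwq exq).
Qed.

Lemma a_nadj_W w : w \in W -> w != x -> ~~ e a w.
Proof. by move=> wW wx; have [r [_ nwa _ _]] := W_dominating_edge_a wW wx; rewrite sym. Qed.

Lemma a_adj_W_eq_x w : w \in W -> e a w -> w = x.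
Proof. by move=> wW; apply: contraTeq; apply: a_nadj_W. Qed.

Lemma I_adj_b y : y \in I -> y != x -> e y b.
Proof.
have [p [q dpq]] := vertex_crit x.
wlog pb : p q dpq / p = b.
  move=> wlog_b; have [epq nxp nxq _] := dpq.
  case: (nadj_x_cases (dominating_edge_avoiding_neq dpq) nxp) => [pI|]; last exact: wlog_b dpq.
  have qx := dominating_edge_avoiding_neq (dominating_edge_avoidingC sym dpq).
  case: (nadj_x_cases qx nxq) => [qI|]; first by rewrite (negbTE (indI pI qI)) in epq.
  exact: wlog_b (dominating_edge_avoidingC sym dpq).
case: dpq; rewrite pb => ebq _ nxq dom yI yx.
have qI : q \in I.
  have qx : q != x by apply: contraTneq ebq => ->; rewrite sym.
  by case: (nadj_x_cases qx nxq) => // qb; rewrite qb irr in ebq.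
case/or4P: (dom y yx) => [/eqP yb|/eqP ->|//|eyq].
- by move: bI; rewrite -yb yI.
- by rewrite sym.
- by rewrite (negbTE (indI yI qI)) in eyq.
Qed.

Lemma nadj_b_in_W u : e a b -> u != b -> ~~ e b u -> u \in W.
Proof.
move=> eab ub nbu; have [->//|ux] := eqVneq u x.
apply: contraR nbu => uW; have [uI|uI] := boolP (u \in I); first by rewrite sym I_adj_b.
by case: (outside uI uW) => ua; [rewrite ua sym | rewrite ua eqxx in ub].
Qed.

Lemma b_nadj_W w : e a b -> w \in W -> w != x -> ~~ e b w.
Proof.
move=> eab wW wx; apply/negP => ebw; apply: (no_dominating_edge ebw) => u.
have [uI|uI] := boolP (u \in I).
  have [->|ux] := eqVneq u x; last by rewrite I_adj_b ?orbT.
  by rewrite (clqW xW wW) ?orbT // eq_sym.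
have [uW|uW] := boolP (u \in W).
  by have [->|uw] := eqVneq u w; rewrite ?eqxx ?(clqW uW wW uw) ?orbT.
by case: (outside uI uW) => ->; rewrite ?eqxx ?eab ?orbT.
Qed.

Lemma b_dominating_edge_x :
  e a b -> exists q, [/\ q \in W, q != x & dominating_edge_avoiding e b x q].
Proof.
move=> eab; have [p [q dpq]] := vertex_crit b.
wlog px : p q dpq / p = x.
  move=> wlog_x; have [_ nbp nbq dom] := dpq.
  have dqp := dominating_edge_avoidingC sym dpq.
  have pW := nadj_b_in_W eab (dominating_edge_avoiding_neq dpq) nbp.
  have qW := nadj_b_in_W eab (dominating_edge_avoiding_neq dqp) nbq.
  have ab : a != b by apply: contraTneq eab => ->; rewrite irr.
  case/or4P: (dom a ab) => [/eqP ap|/eqP aq|eap|eaq].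
  - by move: aW; rewrite ap pW.
  - by move: aW; rewrite aq qW.
  - exact: wlog_x dpq (a_adj_W_eq_x pW eap).
  - exact: wlog_x dqp (a_adj_W_eq_x qW eaq).
have qb := dominating_edge_avoiding_neq (dominating_edge_avoidingC sym dpq).
move: dpq; rewrite px => dxq; have [exq _ nbq _] := dxq.
exists q; split => //; first exact: nadj_b_in_W eab qb nbq.
by apply: contraTneq exq => ->; rewrite irr.
Qed.

Lemma outside_pair_adj_W_small : e a b -> exists q, W \subset [set x; q].
Proof.
move=> eab; have [q [qW qx [exq _ _ dom]]] := b_dominating_edge_x eab.
have I_adj_q y : y \in I -> y != x -> e y q.
  move=> yI yx; have yb : y != b by apply: contraNneq bI => <-.
  case/or4P: (dom y yb) => [/eqP yx'|/eqP yq|eyx|//].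
  - by rewrite yx' eqxx in yx.
  - by move: qW qx; rewrite -yq => /(I_meet_W yI) ->; rewrite eqxx.
  - by rewrite (negbTE (indI yI xI)) in eyx.
have [r drq] := W_dominating_edge_a qW qx.
have rb : r = b.
  have [ear _ nqr _] := drq.
  have rq := dominating_edge_avoiding_neq (dominating_edge_avoidingC sym drq).
  have rI : r \notin I.
    by apply: contra nqr => rI; have [->|rx] := eqVneq r x; rewrite sym // I_adj_q.
  have rW : r \notin W by apply: contra nqr => rW; rewrite (clqW qW rW) // eq_sym.
  by case: (outside rI rW) => // ra; rewrite ra irr in ear.
move: drq; rewrite rb => -[_ _ _ domq].
exists q; apply/subsetP => u uW; rewrite !inE.
have [//|ux] := eqVneq u x; have [//|uq] := eqVneq u q.
case/or4P: (domq u uq) => [/eqP ua|/eqP ub|eua|eub].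
- by move: aW; rewrite -ua uW.
- by move: bW; rewrite -ub uW.
- by move: (a_nadj_W uW ux); rewrite sym eua.
- by move: (b_nadj_W eab uW ux); rewrite sym eub.
Qed.

Lemma outside_pair_nadj : ~~ e a b.
Proof.
apply/negP => eab; have [q Wxq] := outside_pair_adj_W_small eab.
have ab : a != b by apply: contraTneq eab => ->; rewrite irr.
have W_le_ab : #|W| <= #|[set a; b]|.
  by rewrite (leq_trans (subset_leq_card Wxq)) // !cards2 ab; case: (x != q).
have [u uI] := clique_meets_I (clique_pair sym eab) W_le_ab.
by case/set2P=> uab; move: uI; rewrite uab; apply/negP.
Qed.

Lemma W_nadj_b_exists : exists2 wb, wb \in W & (wb != x) && ~~ e b wb.
Proof.
have [wb /and3P[wbW wbx nbwb]|none] := pickP [pred w | [&& w \in W, w != x & ~~ e b w]].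
  by exists wb; rewrite ?wbx.
have b_adj w : w \in W :\ x -> e b w.
  by case/setD1P=> wx wW; move: (none w); rewrite /= wW wx => /negbFE.
have clq : clique e (b |: W :\ x).
  apply/cliqueP => u v /setU1P[->|uW] /setU1P[->|vW]; rewrite ?eqxx // => uv.
  - exact: b_adj.
  - by rewrite sym b_adj.
  - by move: uW vW => /setD1P[_ uW] /setD1P[_ vW]; apply: clqW.
have W_le : #|W| <= #|b |: W :\ x|.
  by rewrite cardsU1 (cardsD1 x W) xW !inE (negbTE bW) andbF.
have [u uI /setU1P[ub|/setD1P[ux uW]]] := clique_meets_I clq W_le.
  by move: bI; rewrite -ub uI.
by move: ux; rewrite (I_meet_W uI uW) eqxx.
Qed.

Lemma add_edge_b_cds wb : ~~ e a b -> wb \in W -> wb != x -> ~~ e b wb ->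
  exists d1 d2, [/\ d1 \in I, d2 \in [set b; wb], e d1 d2 &
    forall u, [|| u == d1, u == d2, add_edge e b wb u d1 | add_edge e b wb u d2]].
Proof.
move=> nab wbW wbx nbwb.
have bwb : b != wb by apply: contraNneq bW => ->.
have [D cdsD D3] := small_cds_exists (edge_crit bwb nbwb)
  (leq_trans gamma_gt2 (gamma_c_le_cardV e [set: T])).
have [d2 d2D d2bw] : exists2 d2, d2 \in D & d2 \in [set b; wb].
  have := cds_add_edge_hits (leq_trans D3 gamma_gt2) cdsD.
  by case/orP=> ?; [exists b | exists wb]; rewrite ?set21 ?set22.
have domD u : (u \in D) || [exists y in D, add_edge e b wb u y].
  by case/and3P: cdsD => _ /forall_inP/(_ u (in_setT u)).
have ab : a != b by apply: contraTneq exa => ->.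
have awb : a != wb by apply: contraNneq aW => ->.
have a_nadj_bwb d : d \in [set b; wb] -> ~~ e a d.
  by case/set2P=> ->; [|apply: a_nadj_W].
have [d1 d1D ad1] : exists2 d1, d1 \in D & (d1 == a) || e a d1.
  case/orP: (domD a) => [aD|/exists_inP[d dD]]; first by exists a; rewrite ?eqxx.
  by rewrite add_edge_l // => ead; exists d; rewrite ?ead ?orbT.
have d1bw : d1 \notin [set b; wb].
  case/orP: ad1 => [/eqP->|ead1]; first by rewrite !inE negb_or ab awb.
  exact: contraL (a_nadj_bwb d1) ead1.
have [d1b d1wb] : d1 != b /\ d1 != wb by move: d1bw; rewrite !inE negb_or => /andP.
have d12 : d1 != d2 by apply: contraNneq d1bw => ->.
have defD : D = [set d1; d2].
  apply/eqP; rewrite eq_sym eqEcard cards2 d12 -ltnS D3 andbT.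
  by apply/subsetP => u /set2P[]->.
have ed12 : e d1 d2.
  rewrite -(add_edge_l _ _ d1b d1wb); apply: conn_set_pair_adj d12 _.
    by rewrite add_edge_l // irr.
  by case/and3P: cdsD; rewrite defD.
have ead1 : e a d1.
  by case/orP: ad1 => [/eqP d1a|//]; move: (a_nadj_bwb d2 d2bw); rewrite -d1a ed12.
have d1I : d1 \in I.
  apply: contraT => d1I; have [d1W|d1W] := boolP (d1 \in W).
    by move: d1I; rewrite (a_adj_W_eq_x d1W ead1) xI.
  by case: (outside d1I d1W) => d1e; [rewrite d1e irr in ead1 | rewrite d1e eqxx in d1b].
exists d1, d2; split => // u.
by have := domD u; rewrite defD dom_set2.
Qed.

Lemma outside_pair_nadj_absurd : ~~ e a b -> False.
Proof.
move=> nab; have [wb wbW /andP[wbx nbwb]] := W_nadj_b_exists.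
have [d1 [d2 [d1I d2bw ed12 dom]]] := add_edge_b_cds nab wbW wbx nbwb.
suff [z [zI zb zwb nzd2]] : exists z, [/\ z \in I, z != b, z != wb & ~~ e z d2].
  move: (dom z); rewrite !add_edge_l // => /or4P[/eqP zd1|/eqP zd2|ezd1|ezd2].
  - by move: nzd2; rewrite zd1 ed12.
  - by move: d2bw; rewrite -zd2 !inE (negbTE zb) (negbTE zwb).
  - by move: (indI zI d1I); rewrite ezd1.
  - by move: nzd2; rewrite ezd2.
case/set2P: d2bw => ->.
  by exists x; split; rewrite // ?(memPn bI) // eq_sym.
have [y dy] := W_dominating_edge_a wbW wbx; have [eay _ nwby _] := dy.
have ywb := dominating_edge_avoiding_neq (dominating_edge_avoidingC sym dy).
have yI : y \in I.
  apply: contraT => yI; have yW : y \notin W.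
    by apply: contra nwby => yW; rewrite (clqW wbW yW) // eq_sym.
  by case: (outside yI yW) => ye; move: eay; rewrite ye ?irr // (negbTE nab).
by exists y; split; rewrite // ?(memPn bI) // sym.
Qed.

Lemma oriented_outside_absurd : False.
Proof.
have [eab|nab] := boolP (e a b); last exact: outside_pair_nadj_absurd.
by move: outside_pair_nadj; rewrite eab.
Qed.

End Oriented.

Lemma W_other_exists : exists2 w, w \in W & w != x.
Proof.
have [p [q [epq _ _ _]]] := vertex_crit x.
have pq : p != q by apply: contraTneq epq => ->; rewrite irr.
have := W_max (clique_pair sym epq); rewrite cards2 pq (cardsD1 x W) xW ltnS.
by case/card_gt0P => w /setD1P[wx wW]; exists w.
Qed.

Lemma adj_x_outside_exists : exists2 c, c \notin I :|: W & e x c.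
Proof.
have [w wW wx] := W_other_exists; have [p [q dpq]] := vertex_crit w.
wlog exp : p q dpq / e x p.
  move=> wlog_e; case/orP: (W_edge_dominates_x wW wx dpq); first exact: wlog_e dpq.
  exact: wlog_e (dominating_edge_avoidingC sym dpq).
have [_ nwp _ _] := dpq.
have [pI pW] := adj_x_notin_IW wW (dominating_edge_avoiding_neq dpq) nwp exp.
by exists p; rewrite // inE negb_or pI.
Qed.

Lemma nadj_x_outside_exists : exists2 c, c \notin I :|: W & ~~ e x c.
Proof.
have [p [q dpq]] := vertex_crit x; have [epq nxp nxq _] := dpq.
have nxW c : c != x -> ~~ e x c -> c \notin W.
  by move=> cx; apply: contra => cW; rewrite clqW // eq_sym.
have px := dominating_edge_avoiding_neq dpq.
have qx := dominating_edge_avoiding_neq (dominating_edge_avoidingC sym dpq).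
have [pI|pI] := boolP (p \in I); last by exists p; rewrite // inE negb_or pI nxW.
have qI : q \notin I by apply: contraL epq; apply: indI.
by exists q; rewrite // inE negb_or qI nxW.
Qed.

Lemma two_outside_absurd (a b : T) : ~: (I :|: W) = [set a; b] -> False.
Proof.
move=> outIW; have outsideE u : (u \notin I :|: W) = (u \in [set a; b]).
  by rewrite -outIW in_setC.
have notin_IW u : u \in [set a; b] -> u \notin I /\ u \notin W.
  by rewrite -outsideE inE negb_or => /andP.
have outside u : u \notin I -> u \notin W -> u = a \/ u = b.
  by move=> uI uW; apply/set2P; rewrite -outsideE inE negb_or uI.
have [aI aW] := notin_IW a (set21 a b); have [bI bW] := notin_IW b (set22 a b).
have [c] := nadj_x_outside_exists; rewrite outsideE => cab nxc.
have [c'] := adj_x_outside_exists; rewrite outsideE => c'ab exc'.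
have [exa|nxa] := boolP (e x a).
  have nxb : ~~ e x b by case/set2P: cab nxc => -> //; rewrite exa.
  exact: (oriented_outside_absurd aI aW bI bW outside exa nxb).
have exb : e x b by move: exc'; case/set2P: c'ab => -> //; rewrite (negbTE nxa).
have outside' u : u \notin I -> u \notin W -> u = b \/ u = a.
  by move=> uI uW; rewrite or_comm; apply: outside.
exact: (oriented_outside_absurd bI bW aI aW outside' exb nxa).
Qed.

End TwoVerticesOutside.

Lemma large_clique_meets (T : finType) (e : rel T) (I W : {set T}) :
  max_clique [set: T] e W -> 0 < #|I :&: W| ->
  (forall W', max_clique [set: T] e W' -> #|I :&: W| <= #|I :&: W'|) ->
  forall W', clique e W' -> #|W| <= #|W'| -> exists2 u, u \in I & u \in W'.
Proof.
move=> [_ [_ maxW]] IW_gt0 minW W' clqW' W_le.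
have maxW' : max_clique [set: T] e W'.
  by split; [exact: subsetT | split=> // W'' sub clq; apply: leq_trans (maxW _ sub clq) W_le].
have /card_gt0P[u] := leq_trans IW_gt0 (minW W' maxW').
by rewrite inE => /andP[]; exists u.
Qed.

Unset Implicit Arguments. Set Strict Implicit. Set Printing Implicit Defensive.

Theorem lemma3p5 (T : finType) (e : rel T) (I W : {set T}) :
  simple_rel e ->
  conn_set e [set: T] ->
  maximal_vertex_critical 3 [set: T] e ->
  max_independent [set: T] e I ->
  max_clique [set: T] e W ->
  (forall W' : {set T}, max_clique [set: T] e W' -> #|I :&: W| <= #|I :&: W'|) ->
  #|I| + #|W| = #|T| - 1 ->
  #|W :&: I| = 0.
Proof.
move=> [sym irr] conn [[g3 edge_crit] [_ [_ vertex_crit]]] maxI maxW minW card_IW.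
have {}irr : irreflexive e by move=> u; apply: negbTE.
have [[_ [/independentP indI _]] [_ [/cliqueP clqW W_max]]] := (maxI, maxW).
apply/eqP; apply: contraT; rewrite cards_eq0 => /set0Pn[x]; rewrite inE => /andP[xW xI].
have IW_x : I :&: W = [set x].
  apply/setP => u; rewrite !inE; apply/andP/eqP => [[uI uW]|->] //.
  exact: (I_meet_W indI clqW xI xW uI uW).
have [a [b [ab outIW]]] : exists a b, a != b /\ ~: (I :|: W) = [set a; b].
  have I_gt0 : 0 < #|I| by apply/card_gt0P; exists x.
  apply/cards2P; move: (cardsC (I :|: W)) (cardsU I W); rewrite IW_x cards1; lia.
have n4 : 3 < #|T| by have := three_le_independence_add_clique sym irr ab maxI maxW; lia.
have gamma_gt2 : 2 < gamma_c [set: T] e by rewrite g3.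
have IW_gt0 : 0 < #|I :&: W| by rewrite IW_x cards1.
case: (two_outside_absurd sym irr indI clqW xI xW (fun W' => W_max W' (subsetT W'))
  (large_clique_meets maxW IW_gt0 minW) gamma_gt2
  (fun u v => edge_crit u v (in_setT u) (in_setT v))
  (fun v => dominating_edge_avoiding_exists sym irr conn n4 gamma_gt2 (vertex_crit v (in_setT v)))
  outIW).
Qed.
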